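(* Let $\mathfrak g$ be a Lie algebra and $r_1,r_2\in\wedge^2\mathfrak g$ skew-symmetric $r$-matrices. Let $\phi:\mathfrak g\to\mathfrak g$ be a Lie algebra homomorphism and $\varphi:\mathfrak g\to\mathfrak g$ a linear map. Then $(\phi,\varphi)$ is a weak homomorphism (resp. weak isomorphism) from $r_2$ to $r_1$ if and only if $(\phi,\varphi^* )$ is a homomorphism (resp. isomorphism) from $r_2^\sharp$ to $r_1^\sharp$ as $\mathcal O$-operators on $\mathfrak g$ with respect to the coadjoint representation.
   Context: A skew-symmetric $r$-matrix is $r\in\wedge^2\mathfrak g$ with $[r,r]=0$ (Gerstenhaber bracket); $r^\sharp:\mathfrak g^*\to\mathfrak g$, $\langle r^\sharp\xi,\eta\rangle=\langle r,\xi\otimes\eta\rangle$, is then an $\mathcal O$-operator with respect to the coadjoint representation $\mathrm{ad}^*$, $\langle\mathrm{ad}^*_x\xi,y\rangle=-\langle\xi,[x,y]\rangle$. A weak homomorphism from $r_2$ to $r_1$ is a pair of a Lie algebra homomorphism $\phi:\mathfrak g\to\mathfrak g$ and a linear map $\varphi:\mathfrak g\to\mathfrak g$ with $(\varphi\otimes\mathrm{Id}_{\mathfrak g})(r_1)=(\mathrm{Id}_{\mathfrak g}\otimes\phi)(r_2)$ and $\varphi[\phi(x),y]=[x,\varphi(y)]$ for all $x,y\in\mathfrak g$; a weak isomorphism if moreover $\phi,\varphi$ are linear isomorphisms. For $\mathcal O$-operators $T,T':V\to\mathfrak g$ with respect to a representation $(V;\rho)$, a homomorphism from $T'$ to $T$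 is a pair of a Lie algebra homomorphism $\phi_{\mathfrak g}:\mathfrak g\to\mathfrak g$ and a linear $\phi_V:V\to V$ with $T\circ\phi_V=\phi_{\mathfrak g}\circ T'$ and $\phi_V\rho(x)(u)=\rho(\phi_{\mathfrak g}(x))(\phi_V(u))$; an isomorphism if both are invertible. Here $V=\mathfrak g^*$, $\rho=\mathrm{ad}^*$, and $\varphi^*:\mathfrak g^*\to\mathfrak g^*$ is the dual map. *)

(* A finite-dimensional Lie algebra g over a field K is
   modelled in coordinates as the row space 'rV[K]_n with an abstract
   bracket [br]; its dual g^* is again 'rV[K]_n, paired with g via the
   standard pairing <xi, x> = sum_i xi_i x_i.  Linear maps g -> g are
   matrices acting on the right (x |-> x *m A). *)
From mathcomp Require Import all_boot all_order all_algebra.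
Set Implicit Arguments. Unset Strict Implicit. Unset Printing Implicit Defensive.
Import GRing.Theory.
Local Open Scope ring_scope.

Section LieDefs.
Variables (K : fieldType) (n : nat).
Notation vec := 'rV[K]_n.

Definition ebasis (j : 'I_n) : vec := delta_mx 0 j.

Definition is_lie (br : vec -> vec -> vec) : Prop :=
  [/\ forall a x y z, br (a *: x + y) z = a *: br x z + br y z,
      forall a x y z, br x (a *: y + z) = a *: br x y + br x z,
      forall x, br x x = 0 &
      forall x y z, br x (br y z) + br y (br z x) + br z (br x y) = 0].

Definition is_lie_hom (br : vec -> vec -> vec) (P : 'M[K]_n) : Prop :=
  forall x y, br x y *m P = br (x *m P) (y *m P).

Definition dpair (xi : vec) (x : vec) : K := (xi *m x^T) 0 0.

(* dual map of the linear map x |-> x *m P : the matrix Q with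
   <xi *m Q, x> = <xi, x *m P>, namely P^T *)
Definition dualmap (P : 'M[K]_n) : 'M[K]_n := P^T.

(* coadjoint representation: <ad^*_x xi, y> = - <xi, [x, y]> *)
Definition coad (br : vec -> vec -> vec) (x : vec) (xi : vec) : vec :=
  \row_j (- dpair xi (br x (ebasis j))).

(* an element r = sum_{ij} R i j e_i (x) e_j of g (x) g, given by R;
   <r, xi (x) eta> *)
Definition tpair (R : 'M[K]_n) (xi eta : vec) : K := (xi *m R *m eta^T) 0 0.

Definition rsharp (R : 'M[K]_n) (xi : vec) : vec :=
  \row_j tpair R xi (ebasis j).

(* (A (x) B)(r) for linear maps A, B (acting on the right) *)
Definition tensor_map (A B R : 'M[K]_n) : 'M[K]_n := A^T *m R *m B.

(* skew-symmetry: r in wedge^2 g *)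
Definition skew (R : 'M[K]_n) : Prop := R^T = - R.

Definition brc (br : vec -> vec -> vec) (i k a : 'I_n) : K :=
  br (ebasis i) (ebasis k) 0 a.

(* [r, r] as an element of g (x) g (x) g (coefficient at e_a (x) e_b (x) e_c):
   [r12, r13] + [r12, r23] + [r13, r23] *)
Definition rr_bracket (br : vec -> vec -> vec) (R : 'M[K]_n)
    (a b c : 'I_n) : K :=
  \sum_(i < n) \sum_(k < n) R i b * R k c * brc br i k a
  + \sum_(j < n) \sum_(k < n) R a j * R k c * brc br j k b
  + \sum_(j < n) \sum_(l < n) R a j * R b l * brc br j l c.

Definition is_skew_rmatrix (br : vec -> vec -> vec) (R : 'M[K]_n) : Prop :=
  skew R /\ forall a b c, rr_bracket br R a b c = 0.

Definition weak_hom (br : vec -> vec -> vec) (R2 R1 Phi Vphi : 'M[K]_n)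
  : Prop :=
  [/\ is_lie_hom br Phi,
      tensor_map Vphi 1%:M R1 = tensor_map 1%:M Phi R2 &
      forall x y, br (x *m Phi) y *m Vphi = br x (y *m Vphi)].

Definition weak_iso (br : vec -> vec -> vec) (R2 R1 Phi Vphi : 'M[K]_n)
  : Prop :=
  [/\ weak_hom br R2 R1 Phi Vphi, Phi \in unitmx & Vphi \in unitmx].

Definition Ohom (br : vec -> vec -> vec) (rho : vec -> vec -> vec)
    (T' T : vec -> vec) (Phig PhiV : 'M[K]_n) : Prop :=
  [/\ is_lie_hom br Phig,
      forall u, T (u *m PhiV) = T' u *m Phig &
      forall x u, rho x u *m PhiV = rho (x *m Phig) (u *m PhiV)].

Definition Oiso (br : vec -> vec -> vec) (rho : vec -> vec -> vec)
    (T' T : vec -> vec) (Phig PhiV : 'M[K]_n) : Prop :=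
  [/\ Ohom br rho T' T Phig PhiV, Phig \in unitmx & PhiV \in unitmx].

End LieDefs.

(** In coordinates [r^sharp] is [xi |-> xi *m R], [varphi^*] is the
    transpose of [varphi], and [ad^*_x] is [xi |-> - xi *m (ad_x)^T].  The
    tensor condition [(varphi (x) 1) r1 = (1 (x) phi) r2] is then literally
    the intertwining [r1^sharp o varphi^* = phi o r2^sharp], and the
    compatibility [varphi [phi x, y] = [x, varphi y]], which reads
    [ad_(phi x) varphi = varphi ad_x], transposes to the
    [ad^*]-equivariance of [varphi^*].  Invertibility is preserved by
    transposition. *)
From HB Require Import structures.
From mathcomp Require Import all_boot all_order all_algebra.
Set Implicit Arguments. Unset Strict Implicit. Unset Printing Implicit Defensive.
Local Open Scope ring_scope.
Import GRing.Theory.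

Lemma rsharpE (K : fieldType) (n : nat) (R : 'M[K]_n) xi :
  rsharp R xi = xi *m R.
Proof.
by apply/rowP => j; rewrite [LHS]mxE /tpair /ebasis trmx_delta -colE mxE.
Qed.

Lemma tensor_map_rsharpP (K : fieldType) (n : nat) (R1 R2 P Q : 'M[K]_n) :
  tensor_map Q 1%:M R1 = tensor_map 1%:M P R2 <->
  (forall xi, rsharp R1 (xi *m dualmap Q) = rsharp R2 xi *m P).
Proof.
rewrite /tensor_map /dualmap trmx1 mul1mx mulmx1.
split=> [QR1 xi | R1R2]; first by rewrite !rsharpE -mulmxA QR1 mulmxA.
by apply/eqP/mulmxP => xi; have := R1R2 xi; rewrite !rsharpE !mulmxA.
Qed.

Section AdjointMatrix.
Variables (K : fieldType) (n : nat) (br : 'rV[K]_n -> 'rV[K]_n -> 'rV[K]_n).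

Definition admx (x : 'rV[K]_n) : 'M[K]_n := lin1_mx (br x).

Lemma coad_admx x xi : coad br x xi = - (xi *m (admx x)^T).
Proof.
apply/rowP => j; rewrite !mxE /dpair !mxE; congr (- _).
by apply: eq_bigr => k _; rewrite !mxE.
Qed.

Lemma coad_equivariantP (P Q : 'M[K]_n) :
  (forall x, admx (x *m P) *m Q = Q *m admx x) <->
  (forall x xi, coad br x xi *m Q^T = coad br (x *m P) (xi *m Q^T)).
Proof.
have coad_dualE x xi :
    coad br x xi *m Q^T = - (xi *m (Q *m admx x)^T) /\
    coad br (x *m P) (xi *m Q^T) = - (xi *m (admx (x *m P) *m Q)^T).
  by rewrite !coad_admx mulNmx !trmx_mul !mulmxA.
split=> [adQ x xi | coadQ x].
  by have [-> ->] := coad_dualE x xi; rewrite adQ.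
apply/trmx_inj/eqP/mulmxP => xi.
by apply/oppr_inj; have [<- <-] := coad_dualE x xi.
Qed.

Hypothesis br_linear : forall x, linear (br x).

Lemma bracket_admx x y : br x y = y *m admx x.
Proof.
pose adx : {linear 'rV[K]_n -> 'rV[K]_n} :=
  HB.pack (br x) (GRing.isLinear.Build _ _ _ _ (br x) (br_linear x)).
by rewrite (mul_rV_lin1 adx).
Qed.

Lemma bracket_equivariantP (P Q : 'M[K]_n) :
  (forall x y, br (x *m P) y *m Q = br x (y *m Q)) <->
  (forall x, admx (x *m P) *m Q = Q *m admx x).
Proof.
split=> [brQ x | adQ x y]; last by rewrite !bracket_admx -!mulmxA adQ.
by apply/eqP/mulmxP => y; have := brQ x y; rewrite !bracket_admx !mulmxA.
Qed.

Lemma weak_hom_OhomP (R1 R2 P Q : 'M[K]_n) :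
  weak_hom br R2 R1 P Q <->
  Ohom br (coad br) (rsharp R2) (rsharp R1) P (dualmap Q).
Proof.
have tensorP := tensor_map_rsharpP R1 R2 P Q.
have equivP : (forall x y, br (x *m P) y *m Q = br x (y *m Q)) <->
    (forall x xi, coad br x xi *m dualmap Q
                  = coad br (x *m P) (xi *m dualmap Q)).
  exact: iff_trans (bracket_equivariantP P Q) (coad_equivariantP P Q).
by split=> -[P_hom R_compat br_compat]; split; by [| apply/tensorP | apply/equivP].
Qed.

Lemma weak_iso_OisoP (R1 R2 P Q : 'M[K]_n) :
  weak_iso br R2 R1 P Q <->
  Oiso br (coad br) (rsharp R2) (rsharp R1) P (dualmap Q).
Proof.
rewrite /weak_iso /Oiso /dualmap unitmx_tr.
by split=> -[hom P_unit Q_unit]; split=> //; apply/weak_hom_OhomP.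
Qed.

End AdjointMatrix.

Theorem proposition7p11 (K : fieldType) (n : nat)
    (br : 'rV[K]_n -> 'rV[K]_n -> 'rV[K]_n) (Hlie : is_lie br)
    (R1 R2 : 'M[K]_n)
    (hr1 : is_skew_rmatrix br R1) (hr2 : is_skew_rmatrix br R2)
    (Phi Vphi : 'M[K]_n) (hPhi : is_lie_hom br Phi) :
  (weak_hom br R2 R1 Phi Vphi <->
     Ohom br (coad br) (rsharp R2) (rsharp R1) Phi (dualmap Vphi)) /\
  (weak_iso br R2 R1 Phi Vphi <->
     Oiso br (coad br) (rsharp R2) (rsharp R1) Phi (dualmap Vphi)).
Proof.
have [_ br_linr _ _] := Hlie.
have br_linear x : linear (br x) by move=> a y z; apply: br_linr.
by split; [apply: weak_hom_OhomP | apply: weak_iso_OisoP].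
Qed.
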